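(* For every digraph $X$ on vertex set $V$, $u_X(-m)=(-1)^{|V|}u_{\overline{X}}(m)$ as polynomials in $m$.
   Context: A digraph $X=(V,E)$: $V$ finite, $E\subset\{(u,v)\in V\times V\mid u\ne v\}$; $\overline{X}=(V,E^c)$ with $(u,v)\in E^c$ iff $u\ne v$, $(u,v)\notin E$. $\Sigma_V$ is the set of bijections $\sigma:[n]\to V$ ($n=|V|$), $X\mathrm{Des}(\sigma)=\{i\in[n-1]\mid(\sigma_i,\sigma_{i+1})\in E\}$; $F_I=\sum x_{i_1}\cdots x_{i_n}$ over $1\le i_1\le\cdots\le i_n$ with $i_j<i_{j+1}$ for $j\in I$; $U_X=\sum_{\sigma\in\Sigma_V}F_{X\mathrm{Des}(\sigma)}$; the Redei–Berge polynomial $u_X(m)$ is the polynomial in $m$ given by $U_X(1,\dots,1,0,\dots)$ with $m$ ones. *)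

From mathcomp Require Import all_boot all_order all_algebra.
Set Implicit Arguments. Unset Strict Implicit. Unset Printing Implicit Defensive.
Import GRing.Theory Num.Theory.

Definition compl_rel (V : eqType) (E : rel V) : rel V :=
  [rel u v | (u != v) && ~~ E u v].

(* X-descent set of sigma : [n] -> V, 0-indexed: i is a descent iff
   i+1 < n and (sigma_i, sigma_{i+1}) is an arc. *)
Definition XDes (V : finType) (E : rel V) (n : nat) (s : {ffun 'I_n -> V})
  (i : 'I_n) : bool :=
  [exists j : 'I_n, (val j == i.+1) && E (s i) (s j)].

(* F_I evaluated at (1,...,1,0,0,...) with m ones: the number of sequences
   1 <= i_1 <= ... <= i_n <= m (values encoded in 'I_m) with i_j < i_{j+1}
   whenever j is in I. *)
Definition F_spec (n m : nat) (I : pred 'I_n) : nat :=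
  #|[set f : {ffun 'I_n -> 'I_m} |
      [forall i : 'I_n, forall j : 'I_n, (val j == i.+1) ==>
         (if I i then f i < f j else f i <= f j)]]|.

(* U_X(1^m) = sum over bijections sigma : [n] -> V of F_{XDes sigma}(1^m). *)
Definition U_spec (V : finType) (E : rel V) (m : nat) : nat :=
  \sum_(s : {ffun 'I_#|V| -> V} | injectiveb s) F_spec m (XDes E s).

From mathcomp Require Import all_boot all_order all_algebra.
From mathcomp Require Import zify ring.
Import GRing.Theory Num.Theory.
Set Implicit Arguments. Unset Strict Implicit. Unset Printing Implicit Defensive.

(* Spreading a weakly increasing sequence by the number of earlier non-descent
   positions makes it strictly increasing, so F_I(1^m) = C(m + n-1-|I|, n),
   a polynomial in m.  For a bijection sigma the X-descents and the
   complement-descents partition the n-1 adjacent positions, so the two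
   binomials attached to sigma are C(m+a, n) and C(m+b, n) with a + b = n-1,
   and these satisfy the reciprocity C(-x+a, n) = (-1)^n C(x+b, n).  Summing
   over sigma gives the theorem. *)

Definition ord_chain n (R : 'I_n -> 'I_n -> bool) : bool :=
  [forall i : 'I_n, forall j : 'I_n, (val j == i.+1) ==> R i j].

Lemma ord_chainP n (R : 'I_n.+1 -> 'I_n.+1 -> bool) :
  reflect (forall l, l < n -> R (inord l) (inord l.+1)) (ord_chain R).
Proof.
apply: (iffP forallP) => [chainR l lt_ln | chainR i].
  have := forallP (chainR (inord l)) (inord l.+1).
  by rewrite /= !inordK ?eqxx // ltnW.
apply/forallP => j; apply/implyP => /eqP j_eq.
have lt_in : i < n by rewrite -ltnS -j_eq ltn_ord.
have := chainR _ lt_in; rewrite inord_val.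
by have -> : inord i.+1 = j by apply: val_inj; rewrite /= inordK -j_eq ?ltn_ord.
Qed.

Lemma sorted_ltn_mktuple n M (g : 'I_n -> 'I_M) :
  sorted ltn [seq val i | i <- mktuple g] = ord_chain (fun i j => g i < g j).
Proof.
apply/(sortedP 0)/forallP => [sorted_g i | chain_g l].
  apply/forallP => j; apply/implyP => /eqP j_eq.
  have lt_in : i.+1 < n by rewrite -j_eq ltn_ord.
  have := sorted_g i; rewrite size_map size_tuple => /(_ lt_in).
  by rewrite !(nth_map (g i)) ?size_tuple // -j_eq (nth_mktuple _ _ i) (nth_mktuple _ _ j).
rewrite size_map size_tuple => lt_ln; have lt_l : l < n := ltnW lt_ln.
rewrite (nth_map (g (Ordinal lt_l))) ?size_tuple // (nth_map (g (Ordinal lt_l))) ?size_tuple //.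
have := forallP (chain_g (Ordinal lt_l)) (Ordinal lt_ln); rewrite eqxx /=.
by rewrite (nth_mktuple _ _ (Ordinal lt_l)) (nth_mktuple _ _ (Ordinal lt_ln)).
Qed.

Lemma card_ord_chain_ltn n M :
  #|[set g : {ffun 'I_n -> 'I_M} | ord_chain (fun i j => g i < g j)]| = 'C(M, n).
Proof.
rewrite -card_ltn_sorted_tuples.
have tuple_inj : injective (fun g : {ffun 'I_n -> 'I_M} => [tuple g i | i < n]).
  move=> g1 g2 eq_g; apply/ffunP => i.
  by rewrite -(tnth_mktuple g1) -(tnth_mktuple g2) eq_g.
rewrite -(card_imset _ tuple_inj); apply: eq_card => t.
apply/imsetP/idP => [[g] | sorted_t]; first by rewrite !inE -sorted_ltn_mktuple => ? ->.
have tK : [tuple [ffun i => tnth t i] i | i < n] = t.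
  by apply: eq_from_tnth => i; rewrite tnth_mktuple ffunE.
by rewrite inE in sorted_t; exists [ffun i => tnth t i]; rewrite ?tK // inE -sorted_ltn_mktuple tK.
Qed.

Lemma card_sum_indicator (T : finType) (P : pred T) : #|P| = \sum_(i : T) P i.
Proof. by rewrite -sum1_card big_mkcond; apply: eq_bigr => i _; rewrite unfold_in; case: (P i). Qed.

Section Spread.
Variables (n m : nat) (I : pred 'I_n.+1).
Hypothesis I_lt : forall i, I i -> i < n.

Let nondesc l := \sum_(0 <= j < l) ~~ I (inord j).
Let N := n - #|I|.

Lemma nondescS l : nondesc l.+1 = nondesc l + ~~ I (inord l).
Proof. by rewrite /nondesc big_nat_recr. Qed.

Lemma nondesc_mono i j : i <= j -> nondesc i <= nondesc j.
Proof. by move=> le_ij; rewrite /nondesc (@big_cat_nat _ _ _ i 0 j) ?leq_addr. Qed.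

Lemma nondesc_last : nondesc n = N.
Proof.
have card_I : #|I| = \sum_(0 <= l < n) I (inord l).
  rewrite card_sum_indicator big_ord_recr /=.
  have /negbTE-> : ~~ I ord_max by apply/negP => /I_lt; rewrite ltnn.
  rewrite addn0 big_mkord; apply: eq_bigr => i _.
  by congr (nat_of_bool (I _)); apply: val_inj; rewrite /= inordK // ltnS ltnW.
have : nondesc n + #|I| = n.
  rewrite card_I /nondesc -big_split /=.
  under eq_bigr do rewrite addn_negb.
  by rewrite sum_nat_const_nat muln1 subn0.
rewrite /N; lia.
Qed.

Definition spread (f : {ffun 'I_n.+1 -> 'I_m.+1}) : {ffun 'I_n.+1 -> 'I_(m + N).+1} :=
  [ffun i => inord (f i + nondesc i)].

Definition squeeze (g : {ffun 'I_n.+1 -> 'I_(m + N).+1}) : {ffun 'I_n.+1 -> 'I_m.+1} :=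
  [ffun i => inord (g i - nondesc i)].

Lemma spreadE f i : spread f i = f i + nondesc i :> nat.
Proof.
rewrite ffunE inordK //.
have : nondesc i <= N by rewrite -nondesc_last nondesc_mono // -ltnS.
have := ltn_ord (f i); lia.
Qed.

Lemma spreadK : cancel spread squeeze.
Proof. by move=> f; apply/ffunP => i; apply: val_inj; rewrite /= ffunE spreadE addnK inordK. Qed.

Lemma spread_chain (f : {ffun 'I_n.+1 -> 'I_m.+1}) :
  ord_chain (fun i j => if I i then f i < f j else f i <= f j) ->
  ord_chain (fun i j => spread f i < spread f j).
Proof.
move/ord_chainP => chain_f; apply/ord_chainP => l lt_ln.
have [lt_l lt_lS] : l < n.+1 /\ l.+1 < n.+1 by split; lia.
rewrite !spreadE !inordK // nondescS; move: (chain_f l lt_ln); case: (I (inord l)) => /=; lia.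
Qed.

Section Squeeze.
Variable g : {ffun 'I_n.+1 -> 'I_(m + N).+1}.
Hypothesis g_ltn : ord_chain (fun i j => g i < g j).

Let h l := g (inord l) - nondesc l.

Lemma nondesc_le_g l : l <= n -> nondesc l <= g (inord l).
Proof.
have /ord_chainP chain_g := g_ltn.
elim: l => [|l IHl] le_ln; first by rewrite /nondesc big_geq.
by move: (chain_g l le_ln) (IHl (ltnW le_ln)); rewrite nondescS; case: (I _) => /=; lia.
Qed.

(* h is weakly increasing and h n <= m because nondesc n = N. *)
Lemma squeeze_bounded l : l <= n -> h l <= m.
Proof.
have /ord_chainP chain_g := g_ltn.
have h_mono : {in [pred i | i <= n] &, {homo h : i j / i <= j}}.
  apply: homo_leq_in => [//|j i k|i j _|j]; first exact: leq_trans.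
    by rewrite !inE => le_jn k /andP[_ lt_kj]; rewrite inE; lia.
  rewrite !inE => _ lt_jn; rewrite /h nondescS.
  by move: (chain_g j lt_jn) (nondesc_le_g (ltnW lt_jn)); case: (I _) => /=; lia.
move=> le_ln; apply: leq_trans (h_mono l n le_ln (leqnn n) le_ln) _.
by rewrite /h /= nondesc_last; have := ltn_ord (g (inord n)); lia.
Qed.

Lemma squeeze_bounds (i : 'I_n.+1) : nondesc i <= g i /\ g i - nondesc i <= m.
Proof.
have le_in : i <= n by rewrite -ltnS.
by split; [have := nondesc_le_g le_in | have := squeeze_bounded le_in]; rewrite /h inord_val.
Qed.

Lemma squeezeE i : squeeze g i = g i - nondesc i :> nat.
Proof. by rewrite ffunE inordK // ltnS; case: (squeeze_bounds i). Qed.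

Lemma squeezeK : spread (squeeze g) = g.
Proof.
apply/ffunP => i; apply: val_inj => /=.
by rewrite spreadE squeezeE subnK //; case: (squeeze_bounds i).
Qed.

Lemma squeeze_chain :
  ord_chain (fun i j => if I i then squeeze g i < squeeze g j else squeeze g i <= squeeze g j).
Proof.
have /ord_chainP chain_g := g_ltn.
apply/ord_chainP => l lt_ln.
have [lt_l lt_lS] : l < n.+1 /\ l.+1 < n.+1 by split; lia.
rewrite !squeezeE !inordK //.
move: (chain_g l lt_ln) (nondesc_le_g (ltnW lt_ln)) (nondesc_le_g lt_ln).
by rewrite nondescS; case: (I _) => /=; lia.
Qed.

End Squeeze.

Lemma F_specS : F_spec m.+1 I = 'C((m + N).+1, n.+1).
Proof.
rewrite /F_spec -(card_imset _ (can_inj spreadK)) -card_ord_chain_ltn.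
apply: eq_card => g; rewrite inE; apply/imsetP/idP => [[f] | g_ltn].
  by rewrite inE => /spread_chain ? ->.
by exists (squeeze g); rewrite ?squeezeK // inE; exact: squeeze_chain.
Qed.

End Spread.

Lemma F_specE n m (I : pred 'I_n) : (forall i, I i -> i.+1 < n) ->
  F_spec m I = 'C(m + (n.-1 - #|I|), n).
Proof.
case: n I => [|n] I I_lt.
  transitivity #|{ffun 'I_0 -> 'I_m}|; last by rewrite card_ffun !card_ord bin0.
  rewrite /F_spec -cardsT; congr #|pred_of_set _|.
  by apply/setP => f; rewrite !inE; apply/forallP => -[].
case: m => [|m].
  apply/eqP; rewrite bin_small; last by lia.
  by rewrite /F_spec cards_eq0 -subset0; apply/subsetP => f; have [] := f ord0.
by rewrite addSn F_specS.
Qed.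

Lemma XDes_lt (V : finType) (E : rel V) n (s : {ffun 'I_n -> V}) i :
  XDes E s i -> i.+1 < n.
Proof. by case/existsP => j /andP[/eqP <- _]; apply: ltn_ord. Qed.

Lemma XDes_succ (V : finType) (E : rel V) n (s : {ffun 'I_n -> V}) (i : 'I_n) (lt_in : i.+1 < n) :
  XDes E s i = E (s i) (s (Ordinal lt_in)).
Proof.
apply/existsP/idP => [[j /andP[/eqP j_eq]] | E_i]; last by exists (Ordinal lt_in); rewrite eqxx.
by have -> : j = Ordinal lt_in by apply: val_inj.
Qed.

Lemma card_XDes_compl (V : finType) (E : rel V) n (s : {ffun 'I_n -> V}) :
  injective s -> #|XDes E s| + #|XDes (compl_rel E) s| = n.-1.
Proof.
move=> inj_s; rewrite !card_sum_indicator -big_split /=.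
have XDes_or i : XDes E s i + XDes (compl_rel E) s i = (i.+1 < n).
  case: ltnP => [lt_in | le_ni]; last first.
    have no_XDes R : XDes R s i = false by apply: contraTF le_ni => /XDes_lt; rewrite -ltnNge.
    by rewrite !no_XDes.
  rewrite !(XDes_succ _ _ lt_in) /=.
  have ne_s : s i != s (Ordinal lt_in) by rewrite (inj_eq inj_s) -val_eqE /= neq_ltn ltnSn.
  by rewrite /compl_rel /= ne_s; case: (E _ _).
rewrite (eq_bigr _ (fun i _ => XDes_or i)).
case: n s inj_s {XDes_or} => [|n] s inj_s; first by rewrite big_ord0.
rewrite big_ord_recr /= ltnn addn0 (eq_bigr (fun _ => 1)) => [|i _]; last by rewrite ltnS ltn_ord.
by rewrite sum1_card card_ord.
Qed.

Local Open Scope ring_scope.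

Definition binom_poly (n a : nat) : {poly rat} :=
  (n`!%:R)^-1 *: \prod_(j < n) ('X + (a%:R - j%:R)%:P).

Lemma prod_natr_ffact (N n : nat) : \prod_(j < n) (N%:R - j%:R : rat) = (N ^_ n)%:R.
Proof.
elim: n => [|n IHn]; first by rewrite big_ord0 ffactn0.
rewrite big_ord_recr /= IHn ffactnSr natrM.
by case: (leqP n N) => [le_nN | lt_Nn]; [rewrite natrB | rewrite ffact_small // !mul0r].
Qed.

Lemma horner_binom_poly n a m : (binom_poly n a).[m%:R] = 'C(m + a, n)%:R.
Proof.
rewrite /binom_poly hornerZ horner_prod.
under eq_bigr => j _ do rewrite hornerD hornerX hornerC addrA -natrD.
rewrite prod_natr_ffact -bin_ffact natrM mulrC -mulrA mulfV ?mulr1 //.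
by rewrite pnatr_eq0 -lt0n fact_gt0.
Qed.

(* Binomial reciprocity: C(-x + a, n) = (-1)^n C(x + b, n) when a + b = n - 1;
   the factors x + a - j and -(x + b - (n - 1 - j)) match under j |-> n - 1 - j. *)
Lemma binom_poly_compN n a b : (a + b = n.-1)%N ->
  binom_poly n a \Po (- 'X) = (-1) ^+ n *: binom_poly n b.
Proof.
case: n => [|n] /= sum_ab.
  by rewrite /binom_poly !big_ord0 expr0 scale1r comp_polyZ -polyC1 comp_polyC.
rewrite /binom_poly comp_polyZ scalerA mulrC -scalerA; congr (_ *: _).
rewrite rmorph_prod /=.
under eq_bigr => j _ do rewrite comp_polyD comp_polyX comp_polyC
   -[_ + _]opprK opprD opprK -polyCN.
rewrite prodrN card_ord -mul_polyC rmorphXn rmorphN rmorph1; congr (_ * _).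
rewrite (reindex_inj rev_ord_inj) /=; apply: eq_bigr => j _; congr (_ + _%:P).
have le_jn : (j <= n)%N by rewrite -ltnS.
rewrite subSS natrB // -{1}sum_ab natrD; ring.
Qed.

Theorem mainTheorem15 (V : finType) (E : rel V) (hE : irreflexive E) :
  exists p q : {poly rat},
    (forall m : nat, p.[m%:R] = (U_spec E m)%:R) /\
    (forall m : nat, q.[m%:R] = (U_spec (compl_rel E) m)%:R) /\
    p \Po (- 'X) = ((-1) ^+ #|V|) *: q.
Proof.
pose n := #|V|.
pose U_poly (R : rel V) := \sum_(s : {ffun 'I_n -> V} | injectiveb s)
  binom_poly n (n.-1 - #|XDes R s|).
have horner_U_poly R m : (U_poly R).[m%:R] = (U_spec R m)%:R.
  rewrite horner_sum /U_spec natr_sum; apply: eq_bigr => s _.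
  by rewrite horner_binom_poly F_specE // => i /XDes_lt.
exists (U_poly E), (U_poly (compl_rel E)); split; [|split]; try exact: horner_U_poly.
rewrite rmorph_sum scaler_sumr; apply: eq_bigr => s /injectiveP inj_s.
by apply: binom_poly_compN; have := card_XDes_compl E inj_s; lia.
Qed.
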